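(* Let $\mathfrak g$ be of type $A_n$, $i\in I$ and $b\in\mathcal B(\infty)$. If $m_i^\ast(b)=1$, then for $1\le s\le i$, $\Sigma^\ast_s(\widetilde f_i^\ast(b))=\Sigma^\ast_s(b)+1$ if $s=1$ and $\Sigma^\ast_s(\widetilde f_i^\ast(b))=\Sigma^\ast_s(b)$ otherwise. If $m_i^\ast(b)=k$ for some $k\ge2$, then $\Sigma^\ast_s(\widetilde f_i^\ast(b))$ equals $\Sigma^\ast_s(b)+2$ if $s<k$, $\Sigma^\ast_s(b)+1$ if $s=k$, and $\Sigma^\ast_s(b)$ if $s>k$. In particular $\Sigma^\ast_k(\widetilde f_i^\ast(b))=\Sigma^\ast_k(b)+1$ for $k=m_i^\ast(b)$.
   Context: $I=\{1,\dots,n\}$. $\mathcal I=\{(s,t)\in\mathbb Z_{>0}\times I:s+t\le n+1\}$; $\mathcal B(\infty)$ is the set of $b=(b_{s,t})_{(s,t)\in\mathcal I}\in\mathbb Z_{\ge0}^{\mathcal I}$ with $b_{1,k}\ge b_{2,k-1}\ge\dots\ge b_{k,1}$ for $1\le k\le n$. Convention: $b_{s,t}=0$, $\mathbf e_{s,t}=0$ for $(s,t)\notin\mathcal I$. $\partial^\ast_{s,t}(b)=b_{s-1,t}-b_{s-1,t+1}-b_{s,t-1}+b_{s,t}$. For $1\le k\le i$: $\Sigma^\ast_k(b)=\sum_{t=1}^k\partial^\ast_{t,i+1-t}(b)$; $m_i^\ast(b)$ is the smallest $k$ with $\Sigma_k^\ast(b)=\max_{1\le l\le i}\Sigma^\ast_l(b)$.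 $\widetilde f_i^\ast(b)=b+\sum_{t=1}^{m_i^\ast(b)}(\mathbf e_{t,i+1-t}-\mathbf e_{t-1,i+1-t})$. *)

From mathcomp Require Import all_boot all_order all_algebra.
Set Implicit Arguments. Unset Strict Implicit. Unset Printing Implicit Defensive.
Import Order.TTheory GRing.Theory Num.Theory.
Local Open Scope ring_scope.

(* Elements b = (b_{s,t}) are encoded as functions nat -> nat -> int that
   vanish outside the index set I(n) = {(s,t) : s,t >= 1, s+t <= n+1}
   (matching the convention b_{s,t} = 0 for (s,t) \notin I). *)

Definition inI (n s t : nat) : bool := [&& (0 < s)%N, (0 < t)%N & (s + t <= n.+1)%N].

Definition Binf (n : nat) (b : nat -> nat -> int) : Prop :=
  [/\ (forall s t, ~~ inI n s t -> b s t = 0),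
      (forall s t, inI n s t -> 0 <= b s t) &
      (forall k s, (1 <= k <= n)%N -> (1 <= s < k)%N ->
          b (s.+1) (k - s)%N <= b s (k.+1 - s)%N)].

Definition evec (n s t : nat) : nat -> nat -> int :=
  fun s' t' => if inI n s t && (s' == s) && (t' == t) then 1 else 0.

Definition dstar (b : nat -> nat -> int) (s t : nat) : int :=
  b s.-1 t - b s.-1 t.+1 - b s t.-1 + b s t.

Definition Sigma (i : nat) (b : nat -> nat -> int) (k : nat) : int :=
  \sum_(1 <= t < k.+1) dstar b t (i.+1 - t)%N.

Definition mstar (i : nat) (b : nat -> nat -> int) : nat :=
  let M := \big[Order.max/Sigma i b 1%N]_(1 <= l < i.+1) Sigma i b l in
  (find (fun l => Sigma i b l == M) (iota 1 i)).+1.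

Definition ftilde (n i : nat) (b : nat -> nat -> int) : nat -> nat -> int :=
  fun s t => b s t + \sum_(1 <= u < (mstar i b).+1)
                       (evec n u (i.+1 - u)%N s t - evec n u.-1 (i.+1 - u)%N s t).

(* The operator f~*_i adds to b a vector depending only on m = m*_i(b), and
   Sigma*_s is additive in b, so Sigma*_s(f~*_i b) - Sigma*_s(b) is the value of
   Sigma*_s on that vector.  The vector is +1 on the cells (u, i+1-u), 1 <= u <= m,
   of the i-th antidiagonal and -1 on the cells (u, i-u), 1 <= u < m, of the
   previous one; summing partial*_{t,i+1-t} over t <= s telescopes to 2, 1 or 0
   according as s < m, s = m or s > m. *)
From mathcomp Require Import all_boot all_order all_algebra zify.
Import Order.TTheory GRing.Theory Num.Theory.
Local Open Scope ring_scope.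

Lemma mstar_range i b : (1 <= i)%N -> (1 <= mstar i b <= i)%N.
Proof.
move=> i_gt0; rewrite /mstar /=.
set M := \big[Order.max/_]_(1 <= l < i.+1) _.
have M_attained : M \in [seq Sigma i b l | l <- iota 1 i].
  rewrite /M big_seq.
  apply: (big_ind (fun v => v \in [seq Sigma i b l | l <- iota 1 i])).
  - by apply: map_f; rewrite mem_iota; lia.
  - by move=> x y x_in y_in; case: leP.
  - by move=> l; rewrite mem_index_iota => l_in; apply: map_f; rewrite mem_iota; lia.
have : has (fun l => Sigma i b l == M) (iota 1 i).
  by case/mapP: M_attained => l l_in ->; apply/hasP; exists l.
by rewrite has_find size_iota.
Qed.

Lemma dstarD (b d : nat -> nat -> int) s t :
  dstar (fun s' t' => b s' t' + d s' t') s t = dstar b s t + dstar d s t.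
Proof. by rewrite /dstar; lia. Qed.

Lemma SigmaD i (b d : nat -> nat -> int) k :
  Sigma i (fun s t => b s t + d s t) k = Sigma i b k + Sigma i d k.
Proof. by rewrite /Sigma -big_split; apply: eq_bigr => t _; rewrite dstarD. Qed.

Section FstarShift.
Variables n i m : nat.

Definition fstar_shift (s t : nat) : int :=
  \sum_(1 <= u < m.+1) (evec n u (i.+1 - u) s t - evec n u.-1 (i.+1 - u) s t).

Lemma fstar_shiftE s t :
  fstar_shift s t =
    (if [&& (1 <= s <= m)%N, inI n s (i.+1 - s) & t == (i.+1 - s)%N] then 1 else 0)
  - (if [&& (s < m)%N, inI n s (i - s) & t == (i - s)%N] then 1 else 0).
Proof.
rewrite /fstar_shift sumrB /evec; congr (_ - _).
- under eq_bigr => u _ do rewrite andbAC (eq_sym s).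
  by rewrite -big_mkcond big_nat1_cond_eq ltnS andbA.
- rewrite big_add1 /=.
  under eq_bigr => u _ do rewrite subSS andbAC (eq_sym s).
  by rewrite -big_mkcond big_nat1_cond_eq.
Qed.

End FstarShift.

Lemma ftilde_shift n i b :
  ftilde n i b = fun s t => b s t + fstar_shift n i (mstar i b) s t.
Proof. by []. Qed.

Definition dstar_gain (m t : nat) : int :=
  (if (1 <= t <= m)%N then 1 else 0) + (if (1 <= t < m)%N then 1 else 0)
  - (if (2 <= t <= m)%N then 1 else 0) - (if (2 <= t <= m.+1)%N then 1 else 0).

Definition Sigma_gain (m s : nat) : int :=
  if s == 0%N then 0 else if (s < m)%N then 2 else if s == m then 1 else 0.

Ltac decide_ifs := repeat match goal with |- context [if ?c then _ else _] =>
  first [ have -> : c = true by rewrite /inI; lia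
        | have -> : c = false by rewrite /inI; lia ] end.

Lemma dstar_fstar_shift n i m t : (1 <= t <= i)%N -> (i <= n)%N -> (1 <= m <= i)%N ->
  dstar (fstar_shift n i m) t (i.+1 - t) = dstar_gain m t.
Proof.
move=> t_range i_le_n m_range; rewrite /dstar !fstar_shiftE /dstar_gain.
have [t_eq1 | t_ge2] : (t = 1 \/ 2 <= t)%N by lia.
all: have [t_lt | [t_eq | [t_eqS | t_gtS]]] : (t < m \/ t = m \/ t = m.+1 \/ m.+1 < t)%N by lia.
all: by decide_ifs; rewrite ?subr0 ?sub0r ?addr0 ?add0r.
Qed.

Lemma sum_dstar_gain m s : (1 <= m)%N -> \sum_(1 <= t < s.+1) dstar_gain m t = Sigma_gain m s.
Proof.
move=> m_gt0; elim: s => [|s IHs]; first by rewrite big_geq.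
rewrite big_nat_recr //= IHs /Sigma_gain /dstar_gain.
have [s_eq0 | s_gt0] : (s = 0 \/ 1 <= s)%N by lia.
all: have [lt | [eq | [eqS | gtS]]] : (s.+1 < m \/ s.+1 = m \/ s.+1 = m.+1 \/ m.+1 < s.+1)%N by lia.
all: by decide_ifs; rewrite ?subr0 ?sub0r ?addr0 ?add0r.
Qed.

Lemma Sigma_fstar_shift n i m s : (s <= i)%N -> (i <= n)%N -> (1 <= m <= i)%N ->
  Sigma i (fstar_shift n i m) s = Sigma_gain m s.
Proof.
move=> s_le_i i_le_n m_range; rewrite /Sigma -sum_dstar_gain; last lia.
by apply: eq_big_nat => t t_range; apply: dstar_fstar_shift => //; lia.
Qed.

Lemma Sigma_ftilde n i b s : (1 <= i <= n)%N -> (s <= i)%N ->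
  Sigma i (ftilde n i b) s = Sigma i b s + Sigma_gain (mstar i b) s.
Proof.
move=> /andP[i_gt0 i_le_n] s_le_i.
by rewrite ftilde_shift SigmaD Sigma_fstar_shift // mstar_range.
Qed.

Theorem lemma6p5 (n i : nat) (b : nat -> nat -> int) :
  (1 <= i <= n)%N -> Binf n b ->
  [/\ (mstar i b = 1%N ->
         forall s : nat, (1 <= s <= i)%N ->
           Sigma i (ftilde n i b) s = Sigma i b s + (if s == 1%N then 1 else 0)),
      (forall k : nat, (2 <= k)%N -> mstar i b = k ->
         forall s : nat, (1 <= s <= i)%N ->
           Sigma i (ftilde n i b) s =
             Sigma i b s + (if (s < k)%N then 2 else if s == k then 1 else 0)) &
      Sigma i (ftilde n i b) (mstar i b) = Sigma i b (mstar i b) + 1].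
Proof.
move=> i_range _; have /andP[i_gt0 _] := i_range.
have m_range := mstar_range i b i_gt0.
split.
- move=> m_eq1 s s_range; rewrite Sigma_ftilde //; last lia.
  by rewrite /Sigma_gain m_eq1; decide_ifs.
- move=> k k_ge2 m_eqk s s_range; rewrite Sigma_ftilde //; last lia.
  by rewrite /Sigma_gain m_eqk; decide_ifs.
- by rewrite Sigma_ftilde // /Sigma_gain; decide_ifs.
Qed.
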